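(* Let $\ell=2$ and assume $\mathcal R$ has a set cover. Let $S$ be a set cover of $\tilde{\mathcal R}_2$ with $|S|=k$. Then the set $C=\{\tau_{i,j}:\hat r_{i,j}\in S\}\subseteq\mathbb X^d_2$ has at most $k$ elements and satisfies $\phi(P,C)\le6\Delta$.
   Context: Let $d\ge1$. A polygonal curve $P:[0,1]\to\mathbb R^d$ is obtained by linearly interpolating a sequence of vertices. For $0\le a\le b\le1$, $P[a,b]$ is the subcurve from $P(a)$ to $P(b)$. $\mathbb X^d_\ell=(\mathbb R^d)^\ell$ is the set of polygonal curves in $\mathbb R^d$ with $\ell$ vertices. The Fréchet distance is $d_F(P,Q)=\inf_\gamma\sup_{t\in[0,1]}\|P(\gamma(t))-Q(t)\|$, $\gamma$ over increasing homeomorphisms of $[0,1]$. $P$ has breakpoint parameters $0=t_1<\dots<t_m=1$, and $\Delta>0$ is fixed. The set system $\mathcal R$ (for $\ell=2$) has ground set $Z=\{1,\dots,m-1\}$ and sets $r_Q=\{z\in Z:\exists\, i\le z<j \text{ with } d_F(Q,P[t_i,t_j])\le\Delta\}$, $Q\in\mathbb X^d_2$. A set cover is a subfamily whose union is the ground set. For finite $C\subset\mathbb X^d_\ell$, $\phi(P,C)=\min_I\max_{(i,j)\in I}\min_{q\in C}d_F(P[t_i,t_j],q)$, where $I$ ranges over sets of pairs $(i,j)$ with $1\le i<j\le m$ and $\bigcup_{(i,j)\in I}[t_i,t_j]=[0,1]$. For $1\le a\le b\le m$, $\tau_{a,b}$ is the segment from $P(t_a)$ to $P(t_b)$; $\pi(s_1,\dots,s_r)$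 is the polygonal curve with vertices $P(t_{s_1}),\dots,P(t_{s_r})$. For $z\in Z$, $x_z$ is the smallest integer $x'\in\{1,\dots,z\}$ such that $d_F(\tau_{x,z},P[t_x,t_z])\le4\Delta$ for every integer $x\in[x',z]$, and $y_z$ is the largest integer $y'\in\{z+1,\dots,m\}$ such that $d_F(\tau_{z+1,y},P[t_{z+1},t_y])\le4\Delta$ for every integer $y\in[z+1,y']$. The set system $\tilde{\mathcal R}_2$ has ground set $Z$ and sets $\hat r_{i,j}=\{z\in Z:\exists \text{ integers } x\in[x_z,z],\ y\in[z+1,y_z] \text{ with } d_F(\pi(x,z,z+1,y),\tau_{i,j})\le2\Delta\}$ for $1\le i\le j\le m$. *)

From HB Require Import structures.
From mathcomp Require Import all_boot all_order all_algebra finmap.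
From mathcomp Require Import all_classical all_reals all_analysis.
Set Implicit Arguments. Unset Strict Implicit. Unset Printing Implicit Defensive.
Import Order.TTheory GRing.Theory Num.Theory.
Import numFieldNormedType.Exports.
Local Open Scope classical_set_scope.
Local Open Scope ring_scope.

Section Frechet.
Variable R : realType.
Variable d : nat.

Definition pt := 'rV[R]_d.

Definition enorm (x : pt) : R := Num.sqrt (\sum_(i < d) (x ord0 i) ^+ 2).

(* a curve is a map [0,1] -> R^d (values outside [0,1] are irrelevant) *)
Definition curve := R -> pt.

Definition I01 : set R := [set x : R | 0 <= x <= 1].

Definition homeo01 (g : R -> R) : Prop :=
  {within I01, continuous g} /\ g 0 = 0 /\ g 1 = 1 /\
  (forall x y, I01 x -> I01 y -> x < y -> g x < g y).

Definition frechet (P Q : curve) : R :=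
  inf [set sup [set enorm (P (gam x) - Q x) | x in I01] | gam in homeo01].

Definition subcurve (P : curve) (a b : R) : curve := fun s => P (a + s * (b - a)).

(* polygonal curve with vertices v 1, ..., v n placed at parameters
   s 1 < ... < s n (1-based indices); linear interpolation in between *)
Definition polyc (n : nat) (s : nat -> R) (v : nat -> pt) : curve := fun x =>
  let i := maxn 1 (\max_(1 <= i < n | (s i <= x)%R) i)%N in
  v i + ((x - s i) / (s i.+1 - s i)) *: (v i.+1 - v i).

Definition polyu (vs : seq pt) : curve :=
  polyc (size vs) (fun i => (i%:R - 1) / ((size vs)%:R - 1)) (fun i => nth 0 vs i.-1).

Definition seg (a b : pt) : curve := polyu [:: a; b].

(* Data of the input curve P: m breakpoints t 1 < ... < t m, vertices p i = P(t i). *)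
Variables (m : nat) (t : nat -> R) (p : nat -> pt) (Delta : R).

Definition Pc : curve := polyc m t p.

Definition tau (a b : nat) : curve := seg (Pc (t a)) (Pc (t b)).

Definition pi4 (s1 s2 s3 s4 : nat) : curve :=
  polyu [:: Pc (t s1); Pc (t s2); Pc (t s3); Pc (t s4)].

Definition Zg : set nat := [set z | (1 <= z < m)%N].

Definition rQ (Q : pt * pt) : set nat :=
  [set z | Zg z /\ exists i j : nat, (1 <= i <= z)%N /\ (z < j <= m)%N /\
       frechet (seg Q.1 Q.2) (subcurve Pc (t i) (t j)) <= Delta].

Definition R_has_set_cover : Prop :=
  exists F : set (pt * pt), \bigcup_(Q in F) rQ Q = Zg.

(* x_z : smallest x' in {1..z} with d_F(tau_{x,z}, P[t_x,t_z]) <= 4 Delta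
   for all integers x in [x', z] (well defined since x' = z qualifies) *)
Definition xgood (z x' : nat) : bool :=
  all (fun x => frechet (tau x z) (subcurve Pc (t x) (t z)) <= 4 * Delta)
      (index_iota x' z.+1).
Definition xz (z : nat) : nat := (\big[minn/z]_(1 <= x' < z.+1 | xgood z x') x')%N.

Definition ygood (z y' : nat) : bool :=
  all (fun y => frechet (tau z.+1 y) (subcurve Pc (t z.+1) (t y)) <= 4 * Delta)
      (index_iota z.+1 y'.+1).
Definition yz (z : nat) : nat := (\big[maxn/z.+1]_(z.+1 <= y' < m.+1 | ygood z y') y')%N.

Definition rhat (i j : nat) : set nat :=
  [set z | Zg z /\ exists x y : nat, (xz z <= x <= z)%N /\ (z.+1 <= y <= yz z)%N /\
       frechet (pi4 x z z.+1 y) (tau i j) <= 2 * Delta].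

Definition validI (I : {set 'I_m.+1 * 'I_m.+1}) : Prop :=
  (forall ij, ij \in I -> (1 <= ij.1 < ij.2)%N) /\
  (forall x : R, (exists2 ij, ij \in I & t ij.1 <= x <= t ij.2) <-> I01 x).

(* phi(P, C) (as an extended real; min over an empty C would be +oo) *)
Definition phi (C : {fset pt * pt}) : \bar R :=
  \big[Order.min/+oo%E]_(I : {set 'I_m.+1 * 'I_m.+1} | `[< validI I >])
    \big[Order.max/-oo%E]_(ij in I)
      \big[Order.min/+oo%E]_(q <- C)
        (frechet (subcurve Pc (t ij.1) (t ij.2)) (seg q.1 q.2))%:E.

End Frechet.

(* Fix z in Z. The cover supplies some \hat r_{i,j} in S and integers
   x_z <= x <= z < z+1 <= y <= y_z with d_F(pi(x,z,z+1,y), tau_{i,j}) <= 2 Delta.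
   The subcurve P[t_x, t_y] is the concatenation of P[t_x, t_z], the edge
   P[t_z, t_{z+1}] and P[t_{z+1}, t_y], which by the choice of x_z and y_z are
   within 4 Delta of the three edges of pi(x,z,z+1,y). Gluing the three matchings
   gives d_F(P[t_x, t_y], pi) <= 4 Delta, hence d_F(P[t_x, t_y], tau_{i,j}) <= 6 Delta.
   As [t_x, t_y] contains [t_z, t_{z+1}], these intervals cover [0, 1]. The set
   cover of R and the bounds on the indices in S are not needed.

   Matchings are built from weak reparametrizations (monotone surjections of
   [0, 1]), which can be glued; because P is Lipschitz, a weak matching can be
   perturbed into a homeomorphism at arbitrarily small cost. *)

From Pilot Require Import Defs.
From HB Require Import structures.
From mathcomp Require Import all_boot all_order all_algebra finmap.
From mathcomp Require Import all_classical all_reals all_analysis.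
From mathcomp Require Import ring lra.
Set Implicit Arguments. Unset Strict Implicit. Unset Printing Implicit Defensive.
Import Order.TTheory GRing.Theory Num.Theory.
Import numFieldNormedType.Exports.
Local Open Scope classical_set_scope.
Local Open Scope ring_scope.

Section EuclideanNorm.
Variables (R : realType) (d : nat).
Implicit Types a b c x : pt R d.
Local Notation en := (@enorm R d).

Lemma enorm_ge0 x : 0 <= en x.
Proof. exact: sqrtr_ge0. Qed.

Lemma enorm_sqr x : en x ^+ 2 = \sum_(i < d) x ord0 i ^+ 2.
Proof. by rewrite sqr_sqrtr // sumr_ge0 // => i _; exact: sqr_ge0. Qed.

Lemma sum_mul_sqr_le a b :
  (\sum_(i < d) a ord0 i * b ord0 i) ^+ 2 <=
  (\sum_(i < d) a ord0 i ^+ 2) * (\sum_(i < d) b ord0 i ^+ 2).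
Proof.
set A := \sum_(i < _) _ ^+ 2; set B := \sum_(i < _) b ord0 i ^+ 2.
set C := \sum_(i < _) _ * _.
have A_ge0 : 0 <= A by apply: sumr_ge0 => i _; exact: sqr_ge0.
have [A0|A_neq0] := eqVneq A 0.
  have a0 i : a ord0 i = 0.
    apply/eqP; rewrite -sqrf_eq0; apply/eqP; move/eqP: A0.
    rewrite psumr_eq0; last by move=> j _; exact: sqr_ge0.
    by move=> /allP /(_ i (mem_index_enum _)) /implyP /(_ isT) /eqP.
  have -> : C = 0 by rewrite /C big1 // => i _; rewrite a0 mul0r.
  by rewrite expr0n mulr_ge0 // sumr_ge0 // => i _; exact: sqr_ge0.
(* Discriminant argument: evaluate [0 <= sum_i (l a_i + b_i)^2] at its minimiser [l = - C / A]. *)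
have expand l : \sum_(i < d) (l * a ord0 i + b ord0 i) ^+ 2 = l ^+ 2 * A + 2 * l * C + B.
  rewrite /A /B /C !mulr_sumr -!big_split /=.
  by apply: eq_bigr => i _; ring.
have : 0 <= A * ((- C / A) ^+ 2 * A + 2 * (- C / A) * C + B).
  by rewrite mulr_ge0 // -expand sumr_ge0 // => i _; exact: sqr_ge0.
have -> : A * ((- C / A) ^+ 2 * A + 2 * (- C / A) * C + B) = A * B - C ^+ 2.
  by field.
by rewrite subr_ge0.
Qed.

Lemma enormD a b : en (a + b) <= en a + en b.
Proof.
rewrite -(ler_pXn2r (n := 2)) // ?nnegrE ?addr_ge0 ?enorm_ge0 //.
rewrite sqrrD !enorm_sqr.
have -> : \sum_(i < d) (a + b) ord0 i ^+ 2 =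
    \sum_(i < d) a ord0 i ^+ 2 + 2 * \sum_(i < d) a ord0 i * b ord0 i
    + \sum_(i < d) b ord0 i ^+ 2.
  by rewrite mulr_sumr -!big_split /=; apply: eq_bigr => i _; rewrite !mxE; ring.
rewrite mulr2n -!addrA lerD2l !addrA lerD2r -mulr2n mulr_natl lerMn2r /=.
apply: le_trans (ler_norm _) _.
rewrite -ler_sqr ?nnegrE ?normr_ge0 ?mulr_ge0 ?enorm_ge0 //.
by rewrite -normrX ger0_norm ?sqr_ge0 // exprMn !enorm_sqr sum_mul_sqr_le.
Qed.

Lemma enormZ (k : R) x : en (k *: x) = `|k| * en x.
Proof.
rewrite /enorm.
have -> : \sum_(i < d) (k *: x) ord0 i ^+ 2 = k ^+ 2 * \sum_(i < d) x ord0 i ^+ 2.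
  by rewrite mulr_sumr; apply: eq_bigr => i _; rewrite !mxE exprMn.
by rewrite sqrtrM ?sqr_ge0 // sqrtr_sqr.
Qed.

Lemma enormN x : en (- x) = en x.
Proof. by rewrite -scaleN1r enormZ normrN normr1 mul1r. Qed.

Lemma enorm0 : en 0 = 0.
Proof. by rewrite -(scale0r (0 : pt R d)) enormZ normr0 mul0r. Qed.

Lemma enorm_distC a b : en (a - b) = en (b - a).
Proof. by rewrite -enormN opprB. Qed.

Lemma enorm_distD a b c : en (a - c) <= en (a - b) + en (b - c).
Proof. by have := enormD (a - b) (b - c); rewrite addrA subrK. Qed.

End EuclideanNorm.

Section PolygonalCurve.
Variables (R : realType) (d n : nat) (s : nat -> R) (v : nat -> pt R d).
Hypotheses (n_ge2 : (2 <= n)%N) (s_incr : forall i, (1 <= i < n)%N -> s i < s i.+1).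
Local Notation en := (@enorm R d).
Local Notation P := (polyc n s v).

Lemma param_lt i j : (1 <= i)%N -> (i < j)%N -> (j <= n)%N -> s i < s j.
Proof.
move=> i_ge1; elim: j => // j IH; rewrite ltnS leq_eqVlt => /orP[/eqP <- jn|ij jn].
  by apply: s_incr; rewrite i_ge1.
apply: lt_trans (IH ij (ltnW jn)) _; apply: s_incr; rewrite jn andbT.
exact: leq_trans i_ge1 (ltnW ij).
Qed.

Lemma param_le i j : (1 <= i)%N -> (i <= j)%N -> (j <= n)%N -> s i <= s j.
Proof.
move=> i_ge1; rewrite leq_eqVlt => /orP[/eqP -> //|ij jn].
exact/ltW/param_lt.
Qed.

Definition polyc_edge (x : R) := maxn 1 (\max_(1 <= i < n | (s i <= x)%R) i)%N.

Lemma polyc_edgeP x : s 1%N <= x <= s n ->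
  [/\ (1 <= polyc_edge x < n)%N, s (polyc_edge x) <= x & x <= s (polyc_edge x).+1].
Proof.
move=> /andP[x_ge x_le].
set M := (\max_(1 <= i < n | (s i <= x)%R) i)%N.
have M_ge1 : (1 <= M)%N.
  by apply: (@leq_bigmax_seq _ _ _ (fun i => i) 1%N) => //; rewrite mem_index_iota.
have [/andP[_ Mn] sM] : (1 <= M < n)%N /\ s M <= x.
  suff [M0|] : M = 0%N \/ ((1 <= M < n)%N /\ s M <= x) by [rewrite M0 in M_ge1|].
  rewrite /M big_seq_cond; elim/big_rec: _ => [|i M' /andP[]]; first by left.
  rewrite mem_index_iota => i_in sx [->|IH]; first by rewrite maxn0; right.
  by rewrite /maxn; case: ifP => _; right.
rewrite /polyc_edge -/M (maxn_idPr M_ge1); split; rewrite ?M_ge1 //.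
have [Mn'|] := ltnP M.+1 n; last first.
  by move=> nM; rewrite (_ : M.+1 = n) //; apply/eqP; rewrite eqn_leq nM Mn.
rewrite leNgt; apply/negP => sx.
have : (M.+1 <= M)%N.
  by apply: (@leq_bigmax_seq _ _ _ (fun i => i) M.+1); rewrite ?mem_index_iota ?Mn' ?ltW.
by rewrite ltnn.
Qed.

Lemma polyc_on_edge i x : (1 <= i < n)%N -> s i <= x <= s i.+1 ->
  P x = v i + ((x - s i) / (s i.+1 - s i)) *: (v i.+1 - v i).
Proof.
move=> /andP[i_ge1 i_lt] /andP[sx xs].
have x_in : s 1%N <= x <= s n.
  by rewrite (le_trans _ sx) ?(le_trans xs) //; apply: param_le => //; exact: ltnW.
have [/andP[j_ge1 j_lt] sj js] := polyc_edgeP x_in.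
rewrite /polyc -/(polyc_edge x); set j := polyc_edge x in j_ge1 j_lt sj js *.
(* Two distinct edges containing [x] are adjacent and meet at [x]. *)
have [ji|ij|<- //] := ltngtP j i.
- have ej : j.+1 = i.
    apply/eqP; rewrite eqn_leq ji leqNgt; apply/negP => h.
    by have := param_lt (ltn0Sn j) h (ltnW i_lt); rewrite ltNge (le_trans sx js).
  have -> : x = s j.+1 by apply/eqP; rewrite eq_le js ej sx.
  have hne : s j.+1 - s j != 0 by rewrite subr_eq0 gt_eqF // s_incr // j_ge1.
  by rewrite -ej subrr mul0r scale0r addr0 divff // scale1r addrC subrK.
- have ej : j = i.+1.
    apply/eqP; rewrite eqn_leq ij andbT leqNgt; apply/negP => h.
    by have := param_lt (ltn0Sn i) h (ltnW j_lt); rewrite ltNge (le_trans sj xs).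
  have -> : x = s j by apply/eqP; rewrite eq_le sj ej xs.
  have hne : s i.+1 - s i != 0 by rewrite subr_eq0 gt_eqF // s_incr // i_ge1.
  by rewrite subrr mul0r scale0r addr0 ej divff // scale1r addrC subrK.
Qed.

Lemma polyc_affine i l : (1 <= i < n)%N -> 0 <= l <= 1 ->
  P (s i + l * (s i.+1 - s i)) = v i + l *: (v i.+1 - v i).
Proof.
move=> i_in /andP[l_ge0 l_le1].
have s_pos : 0 < s i.+1 - s i by rewrite subr_gt0 s_incr.
rewrite (@polyc_on_edge i) //; last first.
  have : 0 <= l * (s i.+1 - s i) by rewrite mulr_ge0 // ltW.
  have : l * (s i.+1 - s i) <= s i.+1 - s i by rewrite ler_piMl // ltW.
  lra.
by congr (_ + _ *: _); rewrite addrC addKr mulfK // gt_eqF.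
Qed.

Lemma polyc_vertex i : (1 <= i <= n)%N -> P (s i) = v i.
Proof.
move=> /andP[i_ge1 i_le]; have [i_lt|] := ltnP i n.
  by have := @polyc_affine i 0; rewrite mul0r addr0 scale0r addr0 i_ge1 lexx ler01; apply.
move=> n_le; have -> : i = n by apply/eqP; rewrite eqn_leq i_le.
have n1 : (1 <= n.-1 < n)%N by case: (n) n_ge2 => [|[|k]] // _; rewrite /= ltnSn.
have := @polyc_affine n.-1 1 n1; rewrite ler01 lexx mul1r scale1r.
by rewrite prednK ?(leq_trans _ n_ge2) // !(addrC _ (_ - _)) !subrK; apply.
Qed.

Definition vertex_norm_max := \big[Order.max/0]_(1 <= i < n.+1) en (v i).

Lemma vertex_norm_le i : (1 <= i <= n)%N -> en (v i) <= vertex_norm_max.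
Proof.
move=> i_in; apply: (@le_bigmax_seq _ _ _ _ 0 i xpredT (fun i => en (v i))) => //.
by rewrite mem_index_iota ltnS.
Qed.

Lemma polyc_norm_le x : s 1%N <= x <= s n -> en (P x) <= vertex_norm_max.
Proof.
move=> x_in; have [/andP[j_ge1 j_lt] sj js] := polyc_edgeP x_in.
set j := polyc_edge x in j_ge1 j_lt sj js *.
rewrite (@polyc_on_edge j) ?j_ge1 ?sj //.
set l := (x - s j) / _.
have s_pos : 0 < s j.+1 - s j by rewrite subr_gt0 s_incr // j_ge1.
have l_ge0 : 0 <= l by apply: divr_ge0; [rewrite subr_ge0 | exact: ltW].
have l_le1 : l <= 1 by rewrite /l ler_pdivrMr // mul1r lerD2r.
(* A point of an edge is a convex combination of its endpoints. *)
rewrite (_ : v j + _ = (1 - l) *: v j + l *: v j.+1); last first.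
  by rewrite scalerBr scalerBl scale1r [RHS]addrAC addrA.
apply: le_trans (enormD _ _) _; rewrite !enormZ !ger0_norm ?subr_ge0 //.
have vj : en (v j) <= vertex_norm_max by apply: vertex_norm_le; rewrite j_ge1 ltnW.
have vj1 : en (v j.+1) <= vertex_norm_max by apply: vertex_norm_le; rewrite j_lt.
have : (1 - l) * en (v j) <= (1 - l) * vertex_norm_max by rewrite ler_wpM2l ?subr_ge0.
have : l * en (v j.+1) <= l * vertex_norm_max by rewrite ler_wpM2l.
lra.
Qed.

Definition slope_max := \big[Order.max/0]_(1 <= i < n) (en (v i.+1 - v i) / (s i.+1 - s i)).

Lemma slope_max_ge0 : 0 <= slope_max.
Proof. by rewrite /slope_max; elim/big_rec: _ => // i y _ y_ge0; rewrite le_max y_ge0 orbT. Qed.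

Lemma polyc_lipschitz_edge i x y : (1 <= i < n)%N ->
  s i <= x <= s i.+1 -> s i <= y <= s i.+1 ->
  en (P x - P y) <= slope_max * `|x - y|.
Proof.
move=> i_in x_in y_in; have s_pos : 0 < s i.+1 - s i by rewrite subr_gt0 s_incr.
rewrite (polyc_on_edge i_in x_in) (polyc_on_edge i_in y_in).
rewrite opprD addrA (addrC (v i)) addrK -scalerBl enormZ -mulrBl.
rewrite (_ : x - s i - (y - s i) = x - y); last by ring.
rewrite normrM (gtr0_norm (x := (s i.+1 - s i)^-1)) ?invr_gt0 //.
rewrite [leLHS](_ : _ = en (v i.+1 - v i) / (s i.+1 - s i) * `|x - y|); last by ring.
apply: ler_wpM2r => //.
apply: (@le_bigmax_seq _ _ _ _ 0 i xpredT (fun i => en (v i.+1 - v i) / (s i.+1 - s i))) => //.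
by rewrite mem_index_iota.
Qed.

Lemma polyc_lipschitz_edges k i x y : (1 <= i)%N -> (i + k < n)%N ->
  s i <= x <= s i.+1 -> s (i + k) <= y <= s (i + k).+1 -> x <= y ->
  en (P y - P x) <= slope_max * (y - x).
Proof.
elim: k y => [|k IH] y i_ge1 ik x_in y_in xy.
  rewrite addn0 in ik y_in; rewrite -(ger0_norm (x := y - x)) ?subr_ge0 //.
  by apply: (@polyc_lipschitz_edge i) => //; rewrite i_ge1.
set z := s (i + k).+1.
have ik' : (i + k < n)%N by rewrite (leq_trans _ ik) // addnS.
have z_edge : s (i + k) <= z <= s (i + k).+1.
  by rewrite lexx andbT ltW // s_incr // ik' (leq_trans i_ge1) ?leq_addr.
have z_ge : x <= z.
  by case/andP: x_in => _ /le_trans; apply; apply: param_le; rewrite ?ltnS ?leq_addr.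
have zy : z <= y by case/andP: y_in; rewrite addnS.
apply: le_trans (enorm_distD _ (P z) _) _.
rewrite (_ : y - x = (y - z) + (z - x)); last by ring.
have ik1 : (1 <= i + k.+1 < n)%N by rewrite ik (leq_trans i_ge1) ?leq_addr.
have z_edge' : s (i + k.+1) <= z <= s (i + k.+1).+1 by rewrite /z -addnS lexx ltW ?s_incr.
rewrite mulrDr lerD ?(IH z) // -(ger0_norm (x := y - z)) ?subr_ge0 //.
exact: polyc_lipschitz_edge ik1 y_in z_edge'.
Qed.

Lemma polyc_lipschitz x y : s 1%N <= x <= s n -> s 1%N <= y <= s n ->
  en (P x - P y) <= slope_max * `|x - y|.
Proof.
wlog xy : x y / x <= y.
  move=> W x_in y_in; have [xy|/ltW yx] := leP x y; first exact: W.
  by rewrite enorm_distC distrC W.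
move=> x_in y_in.
have [/andP[i_ge1 i_lt] sx xs] := polyc_edgeP x_in.
have [/andP[_ j_lt] sy ys] := polyc_edgeP y_in.
set i := polyc_edge x in i_ge1 i_lt sx xs; set j := polyc_edge y in j_lt sy ys.
rewrite enorm_distC distrC ger0_norm ?subr_ge0 //.
have [ij|ji] := leqP i j.
  have := @polyc_lipschitz_edges (j - i) i x y i_ge1.
  by rewrite subnKC // sx xs sy ys; apply.
have -> : x = y.
  apply/eqP; rewrite eq_le xy (le_trans ys) // (le_trans _ sx) //.
  exact: param_le (ltn0Sn j) ji (ltnW i_lt).
by rewrite !subrr enorm0 mulr0.
Qed.

End PolygonalCurve.

Section Reparametrization.
Variable R : realType.
Implicit Types (g h : R -> R) (x y : R).

Lemma I01_0 : I01 (0 : R). Proof. by rewrite /I01 /= lexx ler01. Qed.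
Lemma I01_1 : I01 (1 : R). Proof. by rewrite /I01 /= lexx ler01. Qed.

Lemma I01_onem x : I01 (1 - x) = I01 x.
Proof. by rewrite /I01 /= subr_ge0 lerBlDl lerDr andbC. Qed.

(* Unlike [homeo01], weak reparametrizations are closed under gluing. *)
Definition wreparam g := [/\ forall x, I01 x -> I01 (g x),
  forall x y, I01 x -> I01 y -> x <= y -> g x <= g y &
  forall y, I01 y -> exists2 x, I01 x & g x = y].

Lemma wreparam_I01 g x : wreparam g -> I01 x -> I01 (g x).
Proof. by case=> + _ _; apply. Qed.

Lemma wreparam_id : wreparam id.
Proof. by split=> // y Iy; exists y. Qed.

Lemma wreparam_comp g h : wreparam g -> wreparam h -> wreparam (g \o h).
Proof.
case=> gI gle gS [hI hle hS]; split => /=.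
- by move=> x Ix; apply/gI/hI.
- by move=> x y Ix Iy xy; apply: gle; [exact: hI | exact: hI | exact: hle].
- move=> y /gS[u Iu <-]; have [w Iw <-] := hS u Iu.
  by exists w.
Qed.

Lemma wreparam0 g : wreparam g -> g 0 = 0.
Proof.
case=> gI gle /(_ 0 I01_0)[u Iu gu].
apply/eqP; rewrite eq_le; have /andP[-> _] := gI 0 I01_0; rewrite andbT.
by rewrite -[X in _ <= X]gu; apply: (gle _ _ I01_0 Iu); case/andP: (Iu).
Qed.

Lemma wreparam1 g : wreparam g -> g 1 = 1.
Proof.
case=> gI gle /(_ 1 I01_1)[u Iu gu].
apply/eqP; rewrite eq_le; have /andP[_ ->] := gI 1 I01_1.
by rewrite -[X in X <= _]gu; apply: (gle _ _ Iu I01_1); case/andP: (Iu).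
Qed.

Lemma wreparam_reflect g : wreparam g -> wreparam (fun x => 1 - g (1 - x)).
Proof.
case=> gI gle gS; split.
- by move=> x Ix; rewrite I01_onem; apply: gI; rewrite I01_onem.
- by move=> x y Ix Iy xy; rewrite lerD2l lerN2; apply: gle; rewrite ?I01_onem // lerD2l lerN2.
- move=> y Iy; have Iy' : I01 (1 - y) by rewrite I01_onem.
  have [x Ix gx] := gS _ Iy'.
  by exists (1 - x); rewrite ?I01_onem // subKr gx subKr.
Qed.

Lemma wreparam_near_left g x e : wreparam g -> I01 x -> 0 < e ->
  exists2 r, 0 < r & forall y, I01 y -> x - r < y -> g x - e < g y.
Proof.
move=> [gI gle gS] Ix e_gt0; have /andP[gx0 gx1] := gI x Ix.
have [c_ge0|c_lt0] := lerP 0 (g x - e / 2); last first.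
  by exists 1 => // y /gI /andP[gy0 _] _; lra.
(* A preimage [u] of the level [g x - e / 2] lies left of [x]; [r := x - u]. *)
have [u Iu gu] : exists2 u, I01 u & g u = g x - e / 2.
  by apply: gS; rewrite /I01 /= c_ge0 /=; lra.
have ux : u < x.
  by rewrite ltNge; apply/negP => /(gle _ _ Ix Iu); rewrite gu; lra.
exists (x - u) => [|y Iy]; first by rewrite subr_gt0.
rewrite opprB addrCA subrr addr0 => /ltW /(gle _ _ Iu Iy); rewrite gu; lra.
Qed.

Lemma wreparam_near_right g x e : wreparam g -> I01 x -> 0 < e ->
  exists2 r, 0 < r & forall y, I01 y -> y < x + r -> g y < g x + e.
Proof.
move=> wg Ix e_gt0; have Ix' : I01 (1 - x) by rewrite I01_onem.
have [r r_gt0 near] := wreparam_near_left (wreparam_reflect wg) Ix' e_gt0.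
exists r => // y Iy yx; have Iy' : I01 (1 - y) by rewrite I01_onem.
have yx' : 1 - x - r < 1 - y by lra.
by have := near _ Iy' yx'; rewrite !subKr; lra.
Qed.

Lemma wreparam_continuous g : wreparam g -> {within @I01 R, continuous g}.
Proof.
move=> wg; rewrite continuous_subspace_in => x /set_mem Ix.
apply/cvgrPdist_lt => e e_gt0; rewrite -(nbhs_subspace_in Ix) near_withinE /=.
have [r1 r1_gt0 near1] := wreparam_near_left wg Ix e_gt0.
have [r2 r2_gt0 near2] := wreparam_near_right wg Ix e_gt0.
apply/nbhs_ballP; exists (Num.min r1 r2) => /=; first by rewrite lt_min r1_gt0.
move=> y; rewrite -ball_normE /= lt_min => /andP[y_r1 y_r2] Iy.
have /andP[+ _] : x - r1 < y < x + r1 by rewrite -ltr_distlC.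
have /andP[_ +] : x - r2 < y < x + r2 by rewrite -ltr_distlC.
move=> /(near2 y Iy) + /(near1 y Iy).
by rewrite /from_subspace ltr_distlC; lra.
Qed.

Lemma homeo01_le g : homeo01 g -> forall x y, I01 x -> I01 y -> x <= y -> g x <= g y.
Proof.
case=> _ [_ [_ glt]] x y Ix Iy; rewrite le_eqVlt => /orP[/eqP -> //|xy].
exact/ltW/glt.
Qed.

Lemma I01E : @I01 R = `[0, 1]%classic.
Proof. by apply/seteqP; split => x /=; rewrite in_itv. Qed.

Lemma homeo01_wreparam g : homeo01 g -> wreparam g.
Proof.
move=> hg; have gle := homeo01_le hg; case: hg => gc [g0 [g1 _]]; split => //.
- move=> x /[dup] Ix /andP[x0 x1].
  have := gle 0 x I01_0 Ix x0; have := gle x 1 Ix I01_1 x1.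
  by rewrite g0 g1 /I01 /= => -> ->.
- move=> y /andP[y0 y1].
  have := @IVT R g 0 1 y ler01; rewrite -I01E => /(_ gc).
  rewrite g0 g1 (min_idPl ler01) (max_idPr ler01) y0 y1 => /(_ isT) [x].
  by rewrite in_itv => /= x01 gx; exists x.
Qed.

Lemma homeo01_id : homeo01 (@id R).
Proof. by split; [exact: wreparam_continuous wreparam_id | split]. Qed.

Lemma homeo01_inverse g : homeo01 g ->
  exists2 h, wreparam h & forall y, I01 y -> g (h y) = y.
Proof.
move=> hg; have [gI _ gS] := homeo01_wreparam hg.
case: hg => _ [_ [_ glt]].
pose h y := get (fun x => I01 x /\ g x = y).
have hP y : I01 y -> I01 (h y) /\ g (h y) = y.
  by move=> Iy; apply: (@getPex _ (fun x => I01 x /\ g x = y)); have [x] := gS y Iy; exists x.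
have ginj x y : I01 x -> I01 y -> g x = g y -> x = y.
  move=> Ix Iy gxy; apply/eqP; rewrite eq_le !leNgt.
  apply/andP; split; apply/negP.
    by move=> /(glt _ _ Iy Ix); rewrite gxy ltxx.
  by move=> /(glt _ _ Ix Iy); rewrite gxy ltxx.
exists h => [|y /hP[] //]; split.
- by move=> y /hP[].
- move=> x y Ix Iy xy; rewrite leNgt; apply/negP => hyx.
  have [Ihx ghx] := hP x Ix; have [Ihy ghy] := hP y Iy.
  by have := glt _ _ Ihy Ihx hyx; rewrite ghx ghy ltNge xy.
- move=> x Ix; exists (g x); first exact: gI.
  by have [Ih gh] := hP (g x) (gI x Ix); apply: ginj.
Qed.

Lemma homeo01_perturb g r : wreparam g -> 0 < r < 1 ->
  homeo01 (fun x => (1 - r) * g x + r * x).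
Proof.
move=> wg /andP[r_gt0 r_lt1]; have [_ gle _] := wg.
split.
  have gc := wreparam_continuous wg; have idc := wreparam_continuous (@wreparam_id).
  by move=> x; apply: cvgD; apply: cvgM; [exact: cvg_cst | exact: gc | exact: cvg_cst | exact: idc].
rewrite wreparam0 // wreparam1 // !mulr0 !mulr1 addr0 subrK; do 2 split => //.
move=> x y Ix Iy xy.
have : (1 - r) * g x <= (1 - r) * g y by rewrite ler_wpM2l ?gle ?subr_ge0 ?ltW.
have : r * x < r * y by rewrite ltr_pM2l.
lra.
Qed.

End Reparametrization.

Section FrechetComparison.
Variables (R : realType) (d : nat).
Local Notation en := (@enorm R d).
Implicit Types (A B C : curve R d) (g : R -> R).

Definition bounded01 A := exists M, forall x, I01 x -> en (A x) <= M.

Definition lipschitz01 A (L : R) :=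
  forall x y, I01 x -> I01 y -> en (A x - A y) <= L * `|x - y|.

Definition deviation A B g := [set en (A (g x) - B x) | x in @I01 R].

Section Bounded.
Variables (A B : curve R d).
Hypotheses (bA : bounded01 A) (bB : bounded01 B).

Lemma deviation_le g x : (forall x, I01 x -> I01 (g x)) -> I01 x ->
  en (A (g x) - B x) <= sup (deviation A B g).
Proof.
move=> gI Ix; apply: ub_le_sup; last by exists x.
have [[MA hA] [MB hB]] := (bA, bB); exists (MA + MB) => _ [y Iy <-].
apply: le_trans (enormD _ _) _; rewrite enormN.
by apply: lerD; [apply/hA/gI | exact: hB].
Qed.

Lemma frechet_has_inf : has_inf [set sup (deviation A B g) | g in @homeo01 R].
Proof.
split; first by exists (sup (deviation A B id)), id; first exact: homeo01_id.
exists 0 => _ [g /homeo01_wreparam[gI _ _] <-].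
exact: le_trans (enorm_ge0 _) (deviation_le gI (@I01_0 R)).
Qed.

Lemma frechet_le_homeo g c : homeo01 g ->
  (forall x, I01 x -> en (A (g x) - B x) <= c) -> frechet A B <= c.
Proof.
move=> hg hc; apply: le_trans (_ : sup (deviation A B g) <= c).
  by apply: ge_inf; [case: frechet_has_inf | exists g].
apply: ge_sup; first by exists (en (A (g 0) - B 0)), 0; first exact: I01_0.
by move=> _ [x Ix <-]; apply: hc.
Qed.

Lemma frechet_approx c e : frechet A B <= c -> 0 < e ->
  exists2 g, homeo01 g & forall x, I01 x -> en (A (g x) - B x) <= c + e.
Proof.
move=> hf e_gt0; have [_ [g hg <-] lt_sup] := inf_adherent e_gt0 frechet_has_inf.
exists g => // x Ix; have [gI _ _] := homeo01_wreparam hg.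
apply: le_trans (deviation_le gI Ix) _.
by apply/ltW/(lt_le_trans lt_sup); rewrite lerD2r.
Qed.

End Bounded.

Definition wclose A B (c : R) := forall e, 0 < e ->
  exists2 g, wreparam g & forall x, I01 x -> en (A (g x) - B x) <= c + e.

Lemma frechet_wclose A B c : bounded01 A -> bounded01 B ->
  frechet A B <= c -> wclose A B c.
Proof.
move=> bA bB hf e e_gt0; have [g hg close] := frechet_approx bA bB hf e_gt0.
by exists g => //; exact: homeo01_wreparam.
Qed.

Lemma frechet_wclose_sym A B c : bounded01 A -> bounded01 B ->
  frechet A B <= c -> wclose B A c.
Proof.
move=> bA bB hf e e_gt0; have [g hg close] := frechet_approx bA bB hf e_gt0.
have [h wh ghK] := homeo01_inverse hg; exists h => // y Iy.
by rewrite enorm_distC -{1}(ghK y Iy); apply/close/(wreparam_I01 wh).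
Qed.

Lemma wclose_eq A A' B B' c : (forall x, I01 x -> A x = A' x) ->
  (forall x, I01 x -> B x = B' x) -> wclose A B c -> wclose A' B' c.
Proof.
move=> eqA eqB close e e_gt0; have [g wg le_ce] := close e e_gt0.
by exists g => // x Ix; rewrite -eqA -?eqB ?le_ce //; exact: wreparam_I01 wg Ix.
Qed.

Lemma wclose_trans A B C c1 c2 :
  wclose A B c1 -> wclose B C c2 -> wclose A C (c1 + c2).
Proof.
move=> close1 close2 e e_gt0; have e2_gt0 : 0 < e / 2 by rewrite divr_gt0.
have [g1 w1 le1] := close1 _ e2_gt0; have [g2 w2 le2] := close2 _ e2_gt0.
exists (g1 \o g2) => [|x Ix /=]; first exact: wreparam_comp.
apply: le_trans (enorm_distD _ (B (g2 x)) _) _.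
by have := le1 _ (wreparam_I01 w2 Ix); have := le2 _ Ix; lra.
Qed.

(* A weak reparametrization [g] is turned into the homeomorphism
   [(1 - r) g + r id]; for a Lipschitz curve this costs at most [L r]. *)
Lemma wclose_frechet A B c L : bounded01 A -> bounded01 B -> 0 <= L ->
  lipschitz01 A L -> wclose A B c -> frechet A B <= c.
Proof.
move=> bA bB L_ge0 lipA close; apply/ler_addgt0Pr => e e_gt0.
have e2_gt0 : 0 < e / 2 by rewrite divr_gt0.
have [g wg le_ce] := close _ e2_gt0.
pose r := Num.min (1 / 2) (e / 2 / (L + 1)).
have L1_gt0 : 0 < L + 1 by rewrite ltr_pwDr.
have r_gt0 : 0 < r by rewrite lt_min divr_gt0 //= divr_gt0.
have r_lt1 : r < 1 by rewrite gt_min; apply/orP; left; lra.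
have Lr : L * r <= e / 2.
  apply: (@le_trans _ _ ((L + 1) * r)); first by rewrite ler_wpM2r ?ltW //; lra.
  by rewrite mulrC -ler_pdivlMr // ge_min lexx orbT.
have r01 : 0 < r < 1 by rewrite r_gt0 r_lt1.
have hpsi := homeo01_perturb wg r01.
apply: (frechet_le_homeo bA bB hpsi) => x Ix.
have /andP[x0 x1] := Ix; have /andP[gx0 gx1] := wreparam_I01 wg Ix.
have [psiI _ _] := homeo01_wreparam hpsi.
apply: le_trans (enorm_distD _ (A (g x)) _) _.
have : en (A ((1 - r) * g x + r * x) - A (g x)) <= L * r.
  apply: le_trans (lipA _ _ (psiI x Ix) (wreparam_I01 wg Ix)) _.
  rewrite ler_wpM2l // (_ : _ - g x = r * (x - g x)); last by ring.
  rewrite normrM (ger0_norm (ltW r_gt0)) ler_piMr ?(ltW r_gt0) // ler_norml; lra.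
by have := le_ce x Ix; lra.
Qed.

End FrechetComparison.

Section Gluing.
Variable R : realType.

Definition glue (a b : R) (g1 g2 : R -> R) (u : R) :=
  if u <= b then a * g1 (u / b) else a + (1 - a) * g2 ((u - b) / (1 - b)).

Variables (a b : R) (g1 g2 : R -> R).
Hypotheses (a_ge0 : 0 <= a) (a_le1 : a <= 1) (b_gt0 : 0 < b) (b_lt1 : b < 1).
Hypotheses (w1 : wreparam g1) (w2 : wreparam g2).
Local Notation g := (glue a b g1 g2).

Lemma glue_left u : u <= b -> g u = a * g1 (u / b).
Proof. by rewrite /glue => ->. Qed.

Lemma glue_right u : b <= u -> g u = a + (1 - a) * g2 ((u - b) / (1 - b)).
Proof.
rewrite /glue le_eqVlt => /orP[/eqP <-|bu]; last by rewrite leNgt bu.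
by rewrite lexx divff ?gt_eqF // wreparam1 // subrr mul0r wreparam0 // mulr0 mulr1 addr0.
Qed.

Lemma glue_left_I01 u : I01 u -> u <= b -> I01 (u / b).
Proof.
move=> /andP[u0 _] ub; apply/andP; split; first by rewrite divr_ge0 // ltW.
by rewrite ler_pdivrMr // mul1r.
Qed.

Lemma glue_right_I01 u : I01 u -> b <= u -> I01 ((u - b) / (1 - b)).
Proof.
move=> /andP[_ u1] bu; have b1 : 0 < 1 - b by rewrite subr_gt0.
apply/andP; split; first by rewrite divr_ge0 ?subr_ge0 // ltW.
by rewrite ler_pdivrMr // mul1r lerD2r.
Qed.

Lemma glue_left_range u : I01 u -> u <= b -> 0 <= g u <= a.
Proof.
move=> Iu ub; have /andP[h0 h1] := wreparam_I01 w1 (glue_left_I01 Iu ub).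
by rewrite glue_left // mulr_ge0 //= ler_piMr.
Qed.

Lemma glue_right_range u : I01 u -> b <= u -> a <= g u <= 1.
Proof.
move=> Iu bu; have /andP[h0 h1] := wreparam_I01 w2 (glue_right_I01 Iu bu).
rewrite glue_right //; set G := g2 _.
have : (1 - a) * G <= 1 - a by rewrite ler_piMr // subr_ge0.
have : 0 <= (1 - a) * G by rewrite mulr_ge0 // subr_ge0.
lra.
Qed.

Lemma glue_monotone x y : I01 x -> I01 y -> x <= y -> g x <= g y.
Proof.
move=> Ix Iy xy; have [_ le1 _] := w1; have [_ le2 _] := w2.
have b1 : 0 < 1 - b by rewrite subr_gt0.
have [yb|by_] := lerP y b.
  have xb := le_trans xy yb; rewrite !glue_left // ler_wpM2l //.
  by apply: le1; [exact: glue_left_I01 | exact: glue_left_I01 | rewrite ler_pM2r ?invr_gt0].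
have [xb|bx] := lerP x b.
  have /andP[_ gxa] := glue_left_range Ix xb.
  have /andP[agy _] := glue_right_range Iy (ltW by_).
  exact: le_trans gxa agy.
rewrite !glue_right ?(ltW bx) ?(ltW by_) // lerD2l ler_wpM2l ?subr_ge0 //.
apply: le2; [exact: glue_right_I01 Ix (ltW bx) | exact: glue_right_I01 Iy (ltW by_) |].
by rewrite ler_pM2r ?invr_gt0 // lerD2r.
Qed.

Lemma glue_surj y : I01 y -> exists2 u, I01 u & g u = y.
Proof.
move=> /andP[y0 y1]; have [_ _ S1] := w1; have [_ _ S2] := w2.
have b1 : 0 < 1 - b by rewrite subr_gt0.
have [ya|ay] := lerP y a.
  have [a0|a_neq0] := eqVneq a 0.
    exists 0; first exact: I01_0.
    by rewrite glue_left ?ltW // a0 mul0r; apply/eqP; rewrite eq_le y0 -a0 ya.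
  have a_pos : 0 < a by rewrite lt_def a_neq0.
  have Iz : I01 (y / a) by rewrite /I01 /= divr_ge0 //= ler_pdivrMr // mul1r.
  have [w /andP[w0 w1'] gw] := S1 _ Iz.
  have [b_ge0 b_le1] := (ltW b_gt0, ltW b_lt1).
  exists (w * b); first by rewrite /I01 /= mulr_ge0 ?mulr_ile1.
  rewrite glue_left; last by rewrite ler_piMl.
  by rewrite mulfK ?gt_eqF // gw mulrC divfK.
have a1 : 0 < 1 - a by rewrite subr_gt0 (lt_le_trans ay).
have Iz : I01 ((y - a) / (1 - a)).
  rewrite /I01 /= ler_pdivrMr // mul1r lerD2r y1 andbT.
  by rewrite divr_ge0 ?subr_ge0 // ltW.
have [w /andP[w0 w1'] gw] := S2 _ Iz.
have wb_ge0 : 0 <= w * (1 - b) by rewrite mulr_ge0 // ltW.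
have wb_le : w * (1 - b) <= 1 - b by rewrite ler_piMl // ltW.
exists (b + w * (1 - b)).
  by rewrite /I01 /= addr_ge0 ?(ltW b_gt0) //= addrC -lerBrDr.
rewrite glue_right; last by rewrite lerDl.
rewrite (addrC b) addrK mulfK ?gt_eqF // gw.
by rewrite mulrC divfK ?gt_eqF // addrC subrK.
Qed.

Lemma glue_wreparam : wreparam g.
Proof.
split; [move=> u Iu | exact: glue_monotone | exact: glue_surj].
have [ub|/ltW bu] := lerP u b.
  by have /andP[h0 h1] := glue_left_range Iu ub; rewrite /I01 /= h0 (le_trans h1).
by have /andP[h0 h1] := glue_right_range Iu bu; rewrite /I01 /= h1 (le_trans a_ge0).
Qed.

End Gluing.

Section GluingCurves.
Variables (R : realType) (d : nat).
Implicit Types A B : curve R d.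

Lemma wclose_glue A B a b c : 0 <= a <= 1 -> 0 < b < 1 ->
  wclose (subcurve A 0 a) (subcurve B 0 b) c ->
  wclose (subcurve A a 1) (subcurve B b 1) c -> wclose A B c.
Proof.
move=> /andP[a_ge0 a_le1] /andP[b_gt0 b_lt1] close1 close2 e e_gt0.
have [g1 w1 le1] := close1 e e_gt0; have [g2 w2 le2] := close2 e e_gt0.
exists (glue a b g1 g2) => [|u Iu]; first exact: glue_wreparam.
have [ub|/ltW bu] := lerP u b.
  have := le1 _ (glue_left_I01 b_gt0 Iu ub).
  by rewrite glue_left // /subcurve !add0r !subr0 mulrC divfK ?gt_eqF.
have := le2 _ (glue_right_I01 b_lt1 Iu bu).
by rewrite glue_right // /subcurve (mulrC (1 - a)) divfK ?subrKC // subr_eq0 gt_eqF.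
Qed.

Lemma wclose_glue_sub A B a0 a a1 b0 b b1 c : a0 <= a <= a1 -> a0 < a1 -> b0 < b < b1 ->
  wclose (subcurve A a0 a) (subcurve B b0 b) c ->
  wclose (subcurve A a a1) (subcurve B b b1) c ->
  wclose (subcurve A a0 a1) (subcurve B b0 b1) c.
Proof.
move=> /andP[a0a aa1] a01 /andP[b0b bb1] close1 close2.
have da_gt0 : 0 < a1 - a0 by rewrite subr_gt0.
have db_gt0 : 0 < b1 - b0 by rewrite subr_gt0 (lt_trans b0b).
have [da db] := (lt0r_neq0 da_gt0, lt0r_neq0 db_gt0).
apply: (@wclose_glue _ _ ((a - a0) / (a1 - a0)) ((b - b0) / (b1 - b0))).
- rewrite ler_pdivrMr // mul1r lerD2r aa1 andbT.
  by apply: divr_ge0 (ltW da_gt0); rewrite subr_ge0.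
- rewrite ltr_pdivrMr // mul1r ltrD2r bb1 andbT.
  by apply: divr_gt0 db_gt0; rewrite subr_gt0.
- by apply: wclose_eq close1 => s _; rewrite /subcurve; congr (_ _); field.
- by apply: wclose_eq close2 => s _; rewrite /subcurve; congr (_ _); field.
Qed.

End GluingCurves.

Definition upar {R : realType} (n i : nat) : R := (i%:R - 1) / (n%:R - 1).

Section UniformPolygon.
Variables (R : realType) (d : nat).
Implicit Types vs : seq (pt R d).

Lemma upar_incr n : (2 <= n)%N -> forall i, (1 <= i < n)%N -> upar n i < upar n i.+1 :> R.
Proof.
move=> n_ge2 i /andP[_ i_lt]; have n1 : (0 : R) < n%:R - 1.
  by rewrite subr_gt0 (_ : (1 : R) = 1%:R) // ltr_nat.
by rewrite /upar ltr_pM2r ?invr_gt0 // ltrD2r ltr_nat.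
Qed.

Lemma upar_first n : upar n 1%N = 0 :> R.
Proof. by rewrite /upar subrr mul0r. Qed.

Lemma upar_last n : (2 <= n)%N -> upar n n = 1 :> R.
Proof. by move=> n_ge2; rewrite /upar divff // subr_eq0 pnatr_eq1 gtn_eqF. Qed.

Lemma polyu_subcurve vs k s : (1 <= k < size vs)%N -> I01 s ->
  subcurve (polyu vs) (upar (size vs) k) (upar (size vs) k.+1) s =
  nth 0 vs k.-1 + s *: (nth 0 vs k - nth 0 vs k.-1).
Proof.
move=> k_in Is; have size_ge2 : (2 <= size vs)%N by case/andP: k_in => /leq_ltn_trans; apply.
by rewrite /subcurve /polyu polyc_affine //; exact: upar_incr.
Qed.

Lemma polyu_bounded vs : (2 <= size vs)%N -> bounded01 (polyu vs).
Proof.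
move=> size_ge2; exists (vertex_norm_max (size vs) (fun i => nth 0 vs i.-1)) => x Ix.
apply: (polyc_norm_le _ size_ge2 (upar_incr size_ge2)).
by rewrite upar_first upar_last.
Qed.

Lemma seg_val (a b : pt R d) s : I01 s -> seg a b s = a + s *: (b - a).
Proof.
move=> Is; have := @polyu_subcurve [:: a; b] 1 s isT Is.
by rewrite /subcurve upar_first upar_last // subr0 mulr1 add0r.
Qed.

End UniformPolygon.

Section Reduction.
Variables (R : realType) (d m : nat) (t : nat -> R) (p : nat -> pt R d) (Delta : R).
Hypotheses (Delta_gt0 : 0 < Delta) (m_ge2 : (2 <= m)%N).
Hypothesis t_incr : forall i, (1 <= i < m)%N -> t i < t i.+1.
Local Notation P := (Pc m t p).
Local Notation tau := (tau m t p).
Local Notation xz := (xz m t p Delta).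
Local Notation yz := (yz m t p Delta).

Lemma subcurve_param_in a b x : (1 <= a <= b)%N -> (b <= m)%N -> I01 x ->
  t 1%N <= t a + x * (t b - t a) <= t m.
Proof.
move=> /andP[a_ge1 ab] bm /andP[x0 x1].
have t1a := param_le t_incr (leqnn 1) a_ge1 (leq_trans ab bm).
have tab := param_le t_incr a_ge1 ab bm.
have tbm := param_le t_incr (leq_trans a_ge1 ab) bm (leqnn m).
have : 0 <= x * (t b - t a) by rewrite mulr_ge0 // subr_ge0.
have : x * (t b - t a) <= t b - t a by rewrite ler_piMl // subr_ge0.
by move=> *; apply/andP; split; lra.
Qed.

Lemma subcurve_bounded a b : (1 <= a <= b)%N -> (b <= m)%N -> bounded01 (subcurve P (t a) (t b)).
Proof.
move=> ab bm; exists (vertex_norm_max m p) => x Ix.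
exact: (polyc_norm_le p m_ge2 t_incr (subcurve_param_in ab bm Ix)).
Qed.

Lemma subcurve_lipschitz a b : (1 <= a <= b)%N -> (b <= m)%N ->
  lipschitz01 (subcurve P (t a) (t b)) (slope_max m t p * (t b - t a)).
Proof.
move=> ab bm x y Ix Iy; rewrite /subcurve.
apply: le_trans (polyc_lipschitz _ m_ge2 t_incr (subcurve_param_in ab bm Ix)
  (subcurve_param_in ab bm Iy)) _.
have /andP[a_ge1 ab'] := ab.
have tab : 0 <= t b - t a by rewrite subr_ge0; exact: (param_le t_incr a_ge1 ab' bm).
rewrite (_ : _ - _ = (x - y) * (t b - t a)); last by ring.
by rewrite normrM (ger0_norm tab) mulrA mulrAC.
Qed.

Lemma frechet_tau_edge_le0 a b : (1 <= a)%N -> (a <= b <= a.+1)%N -> (b <= m)%N ->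
  frechet (tau a b) (subcurve P (t a) (t b)) <= 0.
Proof.
move=> a_ge1 /andP[ab ba] bm.
have bd_tau : bounded01 (tau a b) by exact: polyu_bounded.
have bd_sub : bounded01 (subcurve P (t a) (t b)) by apply: subcurve_bounded; rewrite ?a_ge1.
apply: (frechet_le_homeo bd_tau bd_sub (@homeo01_id R)) => s Is /=.
suff -> : subcurve P (t a) (t b) s = tau a b s by rewrite subrr enorm0.
rewrite /tau seg_val // /subcurve.
have [-> | b_neq_a] := eqVneq b a; first by rewrite !subrr mulr0 scaler0 !addr0.
have eb : b = a.+1 by apply/eqP; rewrite eqn_leq ba ltn_neqAle eq_sym b_neq_a ab.
rewrite eb in bm *; have /andP[s0 s1] := Is; rewrite /Pc.
rewrite (polyc_affine p m_ge2 t_incr) ?a_ge1 ?s0 //.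
rewrite !(polyc_vertex p m_ge2 t_incr) // ?bm ?a_ge1 //.
exact: ltnW.
Qed.

Lemma xzP z : (1 <= z)%N ->
  xz z = z \/ xgood m t p Delta z (xz z) /\ (1 <= xz z <= z)%N.
Proof.
move=> z_ge1; rewrite /Defs.xz big_seq_cond.
elim/big_rec: _ => [|i y /andP[+ good] IH]; first by left.
rewrite mem_index_iota /minn => i_in; case: ifP => // _.
by right; split; rewrite // -ltnS.
Qed.

Lemma xz_range z : (1 <= z)%N -> (1 <= xz z <= z)%N.
Proof. by move=> z_ge1; case: (xzP z_ge1) => [->|[_ ->]] //; rewrite z_ge1 leqnn. Qed.

Lemma frechet_tau_xz z x : (1 <= z < m)%N -> (xz z <= x <= z)%N ->
  frechet (tau x z) (subcurve P (t x) (t z)) <= 4 * Delta.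
Proof.
move=> /andP[z_ge1 zm] /andP[xz_x xz_z]; have [ez|[good _]] := xzP z_ge1.
  have -> : x = z by apply/eqP; rewrite eqn_leq xz_z -ez xz_x.
  have zz : (z <= z <= z.+1)%N by rewrite leqnn leqnSn.
  apply: le_trans (frechet_tau_edge_le0 z_ge1 zz (ltnW zm)) _.
  by rewrite mulr_ge0 // ltW.
by move/allP: good => /(_ x); rewrite mem_index_iota ltnS xz_x xz_z; apply.
Qed.

Lemma yzP z : (z < m)%N ->
  yz z = z.+1 \/ ygood m t p Delta z (yz z) /\ (z.+1 <= yz z <= m)%N.
Proof.
move=> zm; rewrite /Defs.yz big_seq_cond.
elim/big_rec: _ => [|i y /andP[+ good] IH]; first by left.
rewrite mem_index_iota /maxn => i_in; case: ifP => // _.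
by right; split; rewrite // -ltnS.
Qed.

Lemma yz_range z : (z < m)%N -> (z.+1 <= yz z <= m)%N.
Proof. by move=> zm; case: (yzP zm) => [->|[_ ->]] //; rewrite leqnn. Qed.

Lemma frechet_tau_yz z y : (1 <= z < m)%N -> (z.+1 <= y <= yz z)%N ->
  frechet (tau z.+1 y) (subcurve P (t z.+1) (t y)) <= 4 * Delta.
Proof.
move=> /andP[z_ge1 zm] /andP[yz_y y_yz]; have [ez|[good _]] := yzP zm.
  have -> : y = z.+1 by apply/eqP; rewrite eqn_leq yz_y -ez y_yz.
  have zz : (z.+1 <= z.+1 <= z.+2)%N by rewrite leqnn leqnSn.
  apply: le_trans (frechet_tau_edge_le0 (ltn0Sn z) zz zm) _.
  by rewrite mulr_ge0 // ltW.
by move/allP: good => /(_ y); rewrite mem_index_iota ltnS yz_y y_yz; apply.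
Qed.

Lemma wclose_polyu_edge vs k a b c : (1 <= k < size vs)%N ->
  (1 <= a <= b)%N -> (b <= m)%N -> nth 0 vs k.-1 = P (t a) -> nth 0 vs k = P (t b) ->
  frechet (tau a b) (subcurve P (t a) (t b)) <= c ->
  wclose (subcurve P (t a) (t b)) (subcurve (polyu vs) (upar (size vs) k) (upar (size vs) k.+1)) c.
Proof.
move=> k_in ab bm va vb close.
have bd_tau : bounded01 (tau a b) by exact: polyu_bounded.
apply: wclose_eq (frechet_wclose_sym bd_tau (subcurve_bounded ab bm) close) => // s Is.
by rewrite polyu_subcurve // va vb /tau seg_val.
Qed.

Lemma frechet_subcurve_tau z i j x y : (1 <= z < m)%N -> (xz z <= x <= z)%N -> (z.+1 <= y <= yz z)%N ->
  frechet (pi4 m t p x z z.+1 y) (tau i j) <= 2 * Delta ->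
  frechet (subcurve P (t x) (t y)) (tau i j) <= 6 * Delta.
Proof.
move=> /andP[z_ge1 zm] /andP[xz_x x_z] /andP[z_y y_yz] close_pi.
have x_ge1 : (1 <= x)%N by case/andP: (xz_range z_ge1) => + _; move/leq_trans; apply.
have y_le : (y <= m)%N by case/andP: (yz_range zm) => _; apply: leq_trans.
have x_lt_y : (x < y)%N := leq_ltn_trans x_z z_y.
have x_le_y : (1 <= x <= y)%N by rewrite x_ge1 ltnW.
set vs := [:: P (t x); P (t z); P (t z.+1); P (t y)].
have edge1 : wclose (subcurve P (t x) (t z)) (subcurve (polyu vs) (upar 4 1) (upar 4 2)) (4 * Delta).
  by apply: (wclose_polyu_edge (k := 1)) (frechet_tau_xz _ _); rewrite ?x_ge1 ?z_ge1 ?xz_x ?(ltnW zm).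
have edge2 : wclose (subcurve P (t z) (t z.+1)) (subcurve (polyu vs) (upar 4 2) (upar 4 3)) (4 * Delta).
  apply: (wclose_polyu_edge (k := 2)) (le_trans (frechet_tau_edge_le0 _ _ _) _);
    by rewrite ?z_ge1 ?leqnSn ?ltnSn ?mulr_ge0 ?ler0n ?(ltW Delta_gt0).
have edge3 : wclose (subcurve P (t z.+1) (t y)) (subcurve (polyu vs) (upar 4 3) (upar 4 4)) (4 * Delta).
  by apply: (wclose_polyu_edge (k := 3)) (frechet_tau_yz _ _); rewrite ?z_ge1 ?z_y ?y_yz.
have t_le := param_le t_incr; have t_lt := param_lt t_incr.
have u_lt := param_lt (@upar_incr R 4 isT).
have glued : wclose (subcurve P (t x) (t y)) (subcurve (polyu vs) (upar 4 1) (upar 4 4)) (4 * Delta).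
  apply: (wclose_glue_sub _ _ _ edge1 (wclose_glue_sub _ _ _ edge2 edge3)).
  - by rewrite !t_le // ?(leq_trans z_ge1) ?(ltnW zm) // (leq_trans (leqnSn z)).
  - by rewrite t_lt.
  - by rewrite !u_lt.
  - by rewrite !t_le // ?(leq_trans z_ge1) ?(ltnW zm).
  - by rewrite !t_lt.
  - by rewrite !u_lt.
have bd_tau : bounded01 (tau i j) by exact: polyu_bounded.
apply: (wclose_frechet (subcurve_bounded x_le_y y_le) bd_tau _ (subcurve_lipschitz x_le_y y_le)).
  by rewrite mulr_ge0 ?slope_max_ge0 // subr_ge0 t_le // ltnW.
rewrite (_ : 6 * Delta = 4 * Delta + 2 * Delta); last by ring.
have bd_pi : bounded01 (pi4 m t p x z z.+1 y) by exact: polyu_bounded.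
apply: wclose_trans _ (frechet_wclose bd_pi bd_tau close_pi).
by apply: wclose_eq glued => // s _; rewrite /subcurve upar_first upar_last // add0r subr0 mulr1.
Qed.

Lemma rhat_subcurve_close z i j : rhat m t p Delta i j z ->
  exists x y, [/\ (1 <= x <= z)%N, (z < y <= m)%N &
    frechet (subcurve P (t x) (t y)) (tau i j) <= 6 * Delta].
Proof.
move=> [zZ [x [y [x_in [y_in close]]]]]; have /andP[z_ge1 zm] := zZ.
exists x, y; split; last exact: frechet_subcurve_tau close.
- by case/andP: (xz_range z_ge1) x_in => X1 _ /andP[/(leq_trans X1) -> ->].
- by case/andP: (yz_range zm) y_in => _ Ym /andP[-> /leq_trans ->].
Qed.

End Reduction.

Section PhiBound.
Variables (R : realType) (d m : nat) (t : nat -> R) (p : nat -> pt R d).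
Hypotheses (m_ge2 : (2 <= m)%N) (t1 : t 1%N = 0) (tm : t m = 1).
Hypothesis t_incr : forall i, (1 <= i < m)%N -> t i < t i.+1.
Variables X Y : nat -> nat.
Hypothesis XY_range : forall z, Zg m z -> (1 <= X z <= z)%N /\ (z < Y z <= m)%N.

Definition cover_pairs : {set 'I_m.+1 * 'I_m.+1} :=
  [set (inord (X z), inord (Y z)) | z : 'I_m in [pred z : 'I_m | (0 < z)%N]].

Lemma mem_cover_pairs ij : ij \in cover_pairs ->
  exists2 z, Zg m z & val ij.1 = X z /\ val ij.2 = Y z.
Proof.
case/imsetP=> z; rewrite inE => z_gt0 ->; have zZ : Zg m z by rewrite /Zg /= z_gt0 ltn_ord.
have [/andP[_ Xz] /andP[_ Ym]] := XY_range zZ.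
by exists z => //=; rewrite !inordK // ltnS // (leq_trans Xz) // ltnW.
Qed.

Lemma cover_pairs_valid : validI t cover_pairs.
Proof.
split=> [ij /mem_cover_pairs[z zZ [-> ->]]|x].
  by have [/andP[-> Xz] /andP[zY _]] := XY_range zZ; rewrite (leq_ltn_trans Xz).
split=> [[ij /mem_cover_pairs[z zZ [-> ->]]] /andP[tXx txY]|/andP[x0 x1]].
  have [/andP[X1 Xz] /andP[zY Ym]] := XY_range zZ; have /andP[_ zm] := zZ.
  have tX : t 1%N <= t (X z) by apply: (param_le t_incr); rewrite // (leq_trans Xz) // ltnW.
  have tY : t (Y z) <= t m by apply: (param_le t_incr); rewrite // (leq_trans (ltn0Sn z)).
  by rewrite /I01 /= -t1 -tm (le_trans tX tXx) (le_trans txY tY).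
(* [x] lies on some edge [[t_z, t_(z+1)]], and that edge is inside [[t_(X z), t_(Y z)]]. *)
have x_in : t 1%N <= x <= t m by rewrite t1 tm x0.
have [/andP[z_ge1 zm] tz tz1] := polyc_edgeP m_ge2 x_in.
set z := polyc_edge m t x in z_ge1 zm tz tz1.
have zZ : Zg m z by rewrite /Zg /= z_ge1.
have [/andP[X1 Xz] /andP[zY Ym]] := XY_range zZ.
exists (inord (X z), inord (Y z)).
  by apply/imsetP; exists (Ordinal zm).
rewrite /= !inordK ?ltnS ?(leq_trans Xz) ?(ltnW zm) //.
by rewrite (le_trans (param_le t_incr X1 Xz (ltnW zm))) // (le_trans tz1) ?(param_le t_incr).
Qed.

Lemma phi_le (C : {fset pt R d * pt R d}) (c : R) (Q : nat -> pt R d * pt R d) :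
  (forall z, Zg m z -> Q z \in C /\
     frechet (subcurve (Pc m t p) (t (X z)) (t (Y z))) (seg (Q z).1 (Q z).2) <= c) ->
  (phi m t p C <= c%:E)%E.
Proof.
move=> close; rewrite /phi; apply: (bigmin_inf cover_pairs).
  exact/asboolP/cover_pairs_valid.
apply: bigmax_le => [|ij /mem_cover_pairs[z zZ [-> ->]]]; first exact: leNye.
have [QC Qc] := close z zZ.
by apply: (@bigmin_inf_seq _ _ _ (enum_fset C) _ (Q z)); rewrite ?lee_fin.
Qed.

End PhiBound.

Theorem mainTheorem5 (R : realType) (d m : nat) (t : nat -> R) (p : nat -> pt R d)
    (Delta : R) :
  0 < Delta ->
  (2 <= m)%N -> t 1%N = 0 -> t m = 1 ->
  (forall i : nat, (1 <= i < m)%N -> t i < t i.+1) ->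
  R_has_set_cover m t p Delta ->
  forall (S : {fset nat * nat}) (k : nat),
    (forall ij, ij \in S -> (1 <= ij.1 <= ij.2)%N /\ (ij.2 <= m)%N) ->
    \bigcup_(ij in [set ij | ij \in S]) rhat m t p Delta ij.1 ij.2 = Zg m ->
    #|` S|%fset = k ->
    let C := [fset (Pc m t p (t ij.1), Pc m t p (t ij.2)) | ij in S]%fset in
    (#|` C|%fset <= k)%N /\ (phi m t p C <= (6 * Delta)%:E)%E.
Proof.
move=> Delta_gt0 m_ge2 t1 tm t_incr _ S k _ S_cover <- C.
split; first exact: leq_imfset_card.
have witness z : exists w : nat * nat * (nat * nat), Zg m z ->
    [/\ w.1 \in S, (1 <= w.2.1 <= z)%N, (z < w.2.2 <= m)%N &
     frechet (subcurve (Pc m t p) (t w.2.1) (t w.2.2)) (tau m t p w.1.1 w.1.2) <= 6 * Delta].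
  have [|notZ] := pselect (Zg m z); last by exists (0, 0, (0, 0))%N.
  rewrite -S_cover => -[ij /= ijS covered].
  have [x [y [x_in y_in close]]] := rhat_subcurve_close Delta_gt0 m_ge2 t_incr covered.
  by exists (ij, (x, y)).
have [F HF] := choice witness.
have XY_range z : Zg m z -> (1 <= (F z).2.1 <= z)%N /\ (z < (F z).2.2 <= m)%N.
  by move=> /HF[].
pose Q z := (Pc m t p (t (F z).1.1), Pc m t p (t (F z).1.2)).
apply: (phi_le m_ge2 t1 tm t_incr XY_range (Q := Q)) => z /HF[FS _ _ close].
by split=> //; apply/imfsetP; exists (F z).1.
Qed.
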